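(* Let $a_{12},d>0$ and consider the rectangle with vertices $A_1'=(-a_{12}/2,\,d)$, $A_2'=(a_{12}/2,\,d)$, $A_4=(-a_{12}/2,\,0)$, $A_3=(a_{12}/2,\,0)$; let $M_{12}=(0,d)$, $M_{34}=(0,0)$. Let $F$ be the intersection of the diagonals $A_1'A_3$, $A_2'A_4$ and $\theta=\angle A_1'FA_2'$, and assume $\theta<90^\circ$. Let $F_{12}$ be the orthocenter of triangle $A_1'FA_2'$, $F_{34}$ the orthocenter of triangle $A_4FA_3$, $w(\theta)=2\sin\frac{\theta}{2}$, and $O_{12},O_{34}$ the points on segment $M_{12}M_{34}$ with $\angle A_1'O_{12}A_2'=\angle A_4O_{34}A_3=120^\circ$. Then $$2|A_1'F_{12}|+2|A_3F_{34}|+w(\theta)|F_{12}F_{34}|=4a_{12}\cos\frac{\theta}{2}$$ and $$2|A_1'O_{12}|+2|A_3O_{34}|+|O_{12}O_{34}|=a_{12}\left(\sqrt{3}+\frac{\cos\frac{\theta}{2}}{\sin\frac{\theta}{2}}\right).$$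
   Context: $|XY|$ denotes Euclidean distance. This is the case $a_{34}=a_{12}$ of an isosceles trapezium with parallel sides $A_1'A_2'$ (length $a_{12}$) and $A_4A_3$ (length $a_{34}$) at distance $d$. *)

From Stdlib Require Export Reals Lra.
Open Scope R_scope.

Definition pt := (R * R)%type.

Definition edist (X Y : pt) : R :=
  sqrt ((fst X - fst Y) ^ 2 + (snd X - snd Y) ^ 2).

Definition dot (U V : pt) : R := fst U * fst V + snd U * snd V.
Definition vsub (X Y : pt) : pt := (fst X - fst Y, snd X - snd Y).

(* Angle XOY (at vertex O), in [0, PI], for X, Y distinct from O. *)
Definition angle (X O Y : pt) : R :=
  acos (dot (vsub X O) (vsub Y O) / (edist X O * edist Y O)).

Definition on_line (X Y Z : pt) : Prop :=
  (fst Y - fst X) * (snd Z - snd X) - (snd Y - snd X) * (fst Z - fst X) = 0.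

Definition on_segment (X Y Z : pt) : Prop :=
  exists t, 0 <= t <= 1 /\
    Z = (fst X + t * (fst Y - fst X), snd X + t * (snd Y - snd X)).

(* H is the orthocenter of triangle ABC: the intersection of the altitudes
   from A and from B (hence also from C). *)
Definition is_orthocenter (H A B C : pt) : Prop :=
  dot (vsub H A) (vsub B C) = 0 /\ dot (vsub H B) (vsub A C) = 0.

(* Everything happens on the symmetry axis x = 0: the diagonals meet at
   F = (0, d/2), and the orthocentres F12, F34 and the points O12, O34 lie on it.
   In the isosceles triangle with base (-a/2, k), (a/2, k), apex (0, y), legs L
   and apex angle t, one has L sin(t/2) = a/2 and L cos(t/2) = |k - y|.  At F
   this gives tan(theta/2) = a/d, and theta < 90 degrees becomes a < d, which
   fixes the order of F12 and F34 on the axis; at a 120 degree apex it gives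
   L = a/sqrt 3 and |k - y| = a/(2 sqrt 3). *)

From Stdlib Require Import Reals Lra Psatz.
Open Scope R_scope.

Lemma edist_eq (X Y : pt) (v : R) :
  0 <= v -> (fst X - fst Y) ^ 2 + (snd X - snd Y) ^ 2 = v ^ 2 -> edist X Y = v.
Proof. intros Hv E; unfold edist; rewrite E; apply sqrt_pow2, Hv. Qed.

Lemma edist_pow2 (X Y : pt) :
  edist X Y ^ 2 = (fst X - fst Y) ^ 2 + (snd X - snd Y) ^ 2.
Proof. apply pow2_sqrt; apply Rplus_le_le_0_compat; apply pow2_ge_0. Qed.

Lemma edist_vertical (x y1 y2 : R) : edist (x, y1) (x, y2) = Rabs (y1 - y2).
Proof.
  unfold edist; cbn [fst snd].
  replace ((x - x) ^ 2 + (y1 - y2) ^ 2) with (Rsqr (y1 - y2)) by (unfold Rsqr; ring).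
  apply sqrt_Rsqr_abs.
Qed.

Lemma edist_mirror (a k y : R) : edist (a / 2, k) (0, y) = edist (- a / 2, k) (0, y).
Proof. unfold edist; cbn [fst snd]; f_equal; field. Qed.

Lemma dot_vsub_bound (X O Y : pt) :
  - (edist X O * edist Y O) <= dot (vsub X O) (vsub Y O) <= edist X O * edist Y O.
Proof.
  pose proof (edist_pow2 X O) as HX; pose proof (edist_pow2 Y O) as HY.
  pose proof (sqrt_pos ((fst X - fst O) ^ 2 + (snd X - snd O) ^ 2)) as PX.
  pose proof (sqrt_pos ((fst Y - fst O) ^ 2 + (snd Y - snd O) ^ 2)) as PY.
  fold (edist X O) in PX; fold (edist Y O) in PY.
  unfold dot, vsub; cbn [fst snd].
  (* Lagrange's identity: |u|^2 |v|^2 - (u.v)^2 = (u x v)^2 *)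
  assert (Hsq : ((fst X - fst O) * (fst Y - fst O) + (snd X - snd O) * (snd Y - snd O)) ^ 2
                <= (edist X O * edist Y O) ^ 2).
  { rewrite Rpow_mult_distr, HX, HY.
    pose proof (pow2_ge_0 ((fst X - fst O) * (snd Y - snd O) - (snd X - snd O) * (fst Y - fst O))).
    nra. }
  assert (0 <= edist X O * edist Y O) by (apply Rmult_le_pos; assumption).
  split; nra.
Qed.

Lemma angle_bound (X O Y : pt) : 0 <= angle X O Y <= PI.
Proof. apply acos_bound. Qed.

Lemma cos_angle (X O Y : pt) : 0 < edist X O -> 0 < edist Y O ->
  cos (angle X O Y) = dot (vsub X O) (vsub Y O) / (edist X O * edist Y O).
Proof.
  intros HX HY; unfold angle; apply cos_acos.
  pose proof (dot_vsub_bound X O Y) as [Hlo Hhi].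
  assert (HP : 0 < edist X O * edist Y O) by (apply Rmult_lt_0_compat; assumption).
  split; apply (Rmult_le_reg_r _ _ _ HP);
    unfold Rdiv; rewrite Rmult_assoc, Rinv_l by lra; lra.
Qed.

Lemma half_angle_of_cos (x L p q : R) :
  0 <= x <= PI -> 0 <= L -> 0 <= p -> 0 <= q -> L ^ 2 = p ^ 2 + q ^ 2 ->
  L ^ 2 * cos x = p ^ 2 - q ^ 2 ->
  L * cos (x / 2) = p /\ L * sin (x / 2) = q.
Proof.
  intros Hx HL Hp Hq HL2 Hcos.
  assert (Hc : 0 <= L * cos (x / 2)) by (apply Rmult_le_pos, cos_ge_0; lra).
  assert (Hs : 0 <= L * sin (x / 2)) by (apply Rmult_le_pos, sin_ge_0; lra).
  replace x with (2 * (x / 2)) in Hcos by field.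
  pose proof (cos_2a_cos (x / 2)) as Ec; pose proof (cos_2a_sin (x / 2)) as Es.
  assert (Hc2 : (L * cos (x / 2)) ^ 2 = p ^ 2) by nra.
  assert (Hs2 : (L * sin (x / 2)) ^ 2 = q ^ 2) by nra.
  split; nra.
Qed.

Lemma sin_lt_cos_half (x : R) : 0 <= x < PI / 2 -> 0 <= sin (x / 2) < cos (x / 2).
Proof.
  intros Hx.
  assert (Hcos : 0 < cos x) by (apply cos_gt_0; lra).
  assert (Hc : 0 < cos (x / 2)) by (apply cos_gt_0; lra).
  assert (Hs : 0 <= sin (x / 2)) by (apply sin_ge_0; lra).
  replace x with (2 * (x / 2)) in Hcos by field; rewrite cos_2a in Hcos.
  split; nra.
Qed.

Lemma isosceles_half_angle (a k y : R) : 0 < a ->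
  edist (- a / 2, k) (0, y) * cos (angle (- a / 2, k) (0, y) (a / 2, k) / 2) = Rabs (k - y) /\
  edist (- a / 2, k) (0, y) * sin (angle (- a / 2, k) (0, y) (a / 2, k) / 2) = a / 2.
Proof.
  intros ha.
  set (L := edist (- a / 2, k) (0, y)).
  assert (HL2 : L ^ 2 = Rabs (k - y) ^ 2 + (a / 2) ^ 2).
  { unfold L; rewrite edist_pow2, pow2_abs; cbn [fst snd]; field. }
  assert (HL : 0 < L).
  { unfold L, edist; apply sqrt_lt_R0; cbn [fst snd].
    pose proof (pow2_ge_0 (k - y)); nra. }
  apply half_angle_of_cos; try lra.
  - apply angle_bound.
  - apply Rabs_pos.
  - rewrite cos_angle by (rewrite ?(edist_mirror a k y); exact HL).
    rewrite (edist_mirror a k y); fold L.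
    rewrite pow2_abs; unfold dot, vsub; cbn [fst snd].
    replace (L * L) with (L ^ 2) by ring; rewrite HL2, pow2_abs.
    field; pose proof (pow2_ge_0 (k - y)); nra.
Qed.

Lemma isosceles_apex_2PI3 (a k y : R) : 0 < a ->
  angle (- a / 2, k) (0, y) (a / 2, k) = 2 * PI / 3 ->
  edist (- a / 2, k) (0, y) = a / sqrt 3 /\ Rabs (k - y) = a / (2 * sqrt 3).
Proof.
  intros ha Hangle.
  destruct (isosceles_half_angle a k y ha) as [Hc Hs].
  rewrite Hangle in Hc, Hs; replace (2 * PI / 3 / 2) with (PI / 3) in Hc, Hs by field.
  rewrite cos_PI3 in Hc; rewrite sin_PI3 in Hs.
  assert (0 < sqrt 3) by (apply sqrt_lt_R0; lra).
  assert (HL : edist (- a / 2, k) (0, y) = a / sqrt 3).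
  { apply (Rmult_eq_reg_r (sqrt 3 / 2)); [ rewrite Hs; field |]; lra. }
  split; [ exact HL | rewrite <- Hc, HL; field ]; lra.
Qed.

Lemma diagonals_intersection (a d : R) (F : pt) : a <> 0 -> d <> 0 ->
  on_line (- a / 2, d) (a / 2, 0) F -> on_line (a / 2, d) (- a / 2, 0) F ->
  F = (0, d / 2).
Proof.
  destruct F as [x y]; unfold on_line; cbn [fst snd]; intros ha hd H1 H2.
  assert (Hx : x = 0).
  { apply (Rmult_eq_reg_l d); [lra | exact hd]. }
  subst x; f_equal.
  apply (Rmult_eq_reg_l a); [lra | exact ha].
Qed.

Lemma orthocenter_isosceles (a k y : R) (H : pt) : a <> 0 ->
  is_orthocenter H (- a / 2, k) (0, y) (a / 2, k) ->
  fst H = 0 /\ (snd H - k) * (y - k) = (a / 2) ^ 2.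
Proof.
  destruct H as [hx hy]; unfold is_orthocenter, dot, vsub; cbn [fst snd].
  intros ha [H1 H2].
  assert (Hx : hx = 0).
  { apply (Rmult_eq_reg_l a); [lra | exact ha]. }
  subst hx; split; [reflexivity | lra].
Qed.

Lemma on_segment_axis (d : R) (O : pt) :
  0 <= d -> on_segment (0, d) (0, 0) O -> exists y, O = (0, y) /\ 0 <= y <= d.
Proof.
  intros hd [t [Ht ->]]; cbn [fst snd].
  exists (d + t * (0 - d)); split; [f_equal; ring | nra].
Qed.

Lemma rectangle_orthocenters (a d : R) (F12 F34 : pt) : 0 < a -> 0 < d ->
  is_orthocenter F12 (- a / 2, d) (0, d / 2) (a / 2, d) ->
  is_orthocenter F34 (- a / 2, 0) (0, d / 2) (a / 2, 0) ->
  F12 = (0, d - a ^ 2 / (2 * d)) /\ F34 = (0, a ^ 2 / (2 * d)).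
Proof.
  intros ha hd H12 H34.
  destruct (orthocenter_isosceles a d (d / 2) F12) as [Hx1 Hy1]; [lra | exact H12 |].
  destruct (orthocenter_isosceles a 0 (d / 2) F34) as [Hx2 Hy2]; [lra | exact H34 |].
  destruct F12 as [x1 y1], F34 as [x2 y2]; cbn [fst snd] in *; subst x1 x2.
  split; f_equal; apply (Rmult_eq_reg_r (d / 2)); try lra; field_simplify; nra.
Qed.

Lemma orthocenter_tree_length (a d x : R) (F12 F34 : pt) :
  0 < a < d -> 0 < cos x -> a * cos x = d * sin x ->
  is_orthocenter F12 (- a / 2, d) (0, d / 2) (a / 2, d) ->
  is_orthocenter F34 (- a / 2, 0) (0, d / 2) (a / 2, 0) ->
  2 * edist (- a / 2, d) F12 + 2 * edist (a / 2, 0) F34 + 2 * sin x * edist F12 F34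
    = 4 * a * cos x.
Proof.
  intros Had Hc Htan H12 H34.
  destruct (rectangle_orthocenters a d F12 F34) as [-> ->]; try lra; try assumption.
  set (c := cos x) in *; set (s := sin x) in *.
  assert (Hsc : s ^ 2 + c ^ 2 = 1).
  { pose proof (sin2_cos2 x) as E; unfold Rsqr in E; unfold s, c; lra. }
  assert (Ha : a = d * s / c) by (rewrite <- Htan; field; lra).
  assert (Hs : 0 < s < c) by (split; nra).
  set (e := a ^ 2 / (2 * d)).
  assert (He : e = d * s ^ 2 / (2 * c ^ 2)) by (unfold e; rewrite Ha; field; lra).
  set (leg := d * s / (2 * c ^ 2)).
  assert (Hleg : (a / 2) ^ 2 + e ^ 2 = leg ^ 2).
  { replace (leg ^ 2) with (leg ^ 2 * (s ^ 2 + c ^ 2)) by (rewrite Hsc; ring).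
    unfold leg; rewrite He, Ha; field; lra. }
  assert (Hleg0 : 0 <= leg).
  { unfold leg, Rdiv; apply Rmult_le_pos; [nra | apply Rlt_le, Rinv_0_lt_compat; nra]. }
  assert (Hmid : d - e - e = d * (c ^ 2 - s ^ 2) / c ^ 2) by (rewrite He; field; lra).
  assert (Hmid0 : 0 <= d - e - e).
  { rewrite Hmid; unfold Rdiv.
    apply Rmult_le_pos; [apply Rmult_le_pos; nra | apply Rlt_le, Rinv_0_lt_compat; nra]. }
  rewrite (edist_eq (- a / 2, d) (0, d - e) leg) by
    (first [assumption | cbn [fst snd]; rewrite <- Hleg; field]).
  rewrite (edist_eq (a / 2, 0) (0, e) leg) by
    (first [assumption | cbn [fst snd]; rewrite <- Hleg; field]).
  rewrite edist_vertical, Rabs_pos_eq, Hmid by lra.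
  replace (4 * a * c) with (4 * d * s) by (rewrite Ha; field; lra).
  unfold leg; replace (s ^ 2) with (1 - c ^ 2) by lra.
  field; lra.
Qed.

Lemma steiner_tree_length (a d : R) (O12 O34 : pt) :
  0 < a -> a <= sqrt 3 * d ->
  on_segment (0, d) (0, 0) O12 -> on_segment (0, d) (0, 0) O34 ->
  angle (- a / 2, d) O12 (a / 2, d) = 2 * PI / 3 ->
  angle (- a / 2, 0) O34 (a / 2, 0) = 2 * PI / 3 ->
  2 * edist (- a / 2, d) O12 + 2 * edist (a / 2, 0) O34 + edist O12 O34
    = sqrt 3 * a + d.
Proof.
  intros ha had S12 S34 A12 A34.
  assert (Hr3 : sqrt 3 * sqrt 3 = 3) by (apply sqrt_sqrt; lra).
  assert (Hr3p : 0 < sqrt 3) by (apply sqrt_lt_R0; lra).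
  assert (hd : 0 < d) by nra.
  destruct (on_segment_axis d O12) as [y1 [-> Hy1]]; [lra | exact S12 |].
  destruct (on_segment_axis d O34) as [y2 [-> Hy2]]; [lra | exact S34 |].
  destruct (isosceles_apex_2PI3 a d y1 ha A12) as [L1 H1].
  destruct (isosceles_apex_2PI3 a 0 y2 ha A34) as [L2 H2].
  rewrite Rabs_pos_eq in H1 by lra; rewrite Rabs_left1 in H2 by lra.
  assert (Hhalf : a / sqrt 3 = 2 * (a / (2 * sqrt 3))) by (field; lra).
  assert (Hgap : a / sqrt 3 <= d).
  { apply (Rmult_le_reg_r (sqrt 3)); [lra |]. field_simplify; lra. }
  rewrite L1, edist_mirror, L2, edist_vertical, Rabs_pos_eq by lra.
  replace (y1 - y2) with (d - a / sqrt 3) by lra.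
  replace (sqrt 3 * a) with (sqrt 3 * sqrt 3 * a / sqrt 3) by (field; lra).
  rewrite Hr3; field; lra.
Qed.

Theorem corollary1
  (a12 d : R) (F F12 F34 O12 O34 : pt)
  (ha : 0 < a12) (hd : 0 < d)
  (hF1 : on_line (- a12 / 2, d) (a12 / 2, 0) F)
  (hF2 : on_line (a12 / 2, d) (- a12 / 2, 0) F)
  (htheta : angle (- a12 / 2, d) F (a12 / 2, d) < PI / 2)
  (hF12 : is_orthocenter F12 (- a12 / 2, d) F (a12 / 2, d))
  (hF34 : is_orthocenter F34 (- a12 / 2, 0) F (a12 / 2, 0))
  (hO12s : on_segment (0, d) (0, 0) O12)
  (hO34s : on_segment (0, d) (0, 0) O34)
  (hO12 : angle (- a12 / 2, d) O12 (a12 / 2, d) = 2 * PI / 3)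
  (hO34 : angle (- a12 / 2, 0) O34 (a12 / 2, 0) = 2 * PI / 3) :
  let A1' : pt := (- a12 / 2, d) in
  let A2' : pt := (a12 / 2, d) in
  let A4 : pt := (- a12 / 2, 0) in
  let A3 : pt := (a12 / 2, 0) in
  let theta := angle A1' F A2' in
  let w := 2 * sin (theta / 2) in
  2 * edist A1' F12 + 2 * edist A3 F34 + w * edist F12 F34
    = 4 * a12 * cos (theta / 2)
  /\
  2 * edist A1' O12 + 2 * edist A3 O34 + edist O12 O34
    = a12 * (sqrt 3 + cos (theta / 2) / sin (theta / 2)).
Proof.
  assert (HF : F = (0, d / 2)) by (apply (diagonals_intersection a12); lra || assumption).
  subst F; cbv zeta.
  set (theta := angle (- a12 / 2, d) (0, d / 2) (a12 / 2, d)) in *.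
  destruct (isosceles_half_angle a12 d (d / 2) ha) as [Hc Hs]; fold theta in Hc, Hs.
  rewrite Rabs_pos_eq in Hc by lra.
  destruct (sin_lt_cos_half theta) as [Hs0 Hsc]; [split; [apply angle_bound | exact htheta] |].
  assert (Htan : a12 * cos (theta / 2) = d * sin (theta / 2)) by nra.
  assert (Had : a12 < d) by nra.
  split.
  - apply orthocenter_tree_length; auto; lra.
  - assert (Hs_pos : 0 < sin (theta / 2)) by nra.
    assert (Hr3 : 1 <= sqrt 3) by (rewrite <- sqrt_1; apply sqrt_le_1_alt; lra).
    rewrite (steiner_tree_length a12 d) by (auto; nra).
    replace (a12 * (sqrt 3 + cos (theta / 2) / sin (theta / 2)))
      with (sqrt 3 * a12 + a12 * cos (theta / 2) / sin (theta / 2)) by (field; lra).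
    rewrite Htan; field; lra.
Qed.
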